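(* Let $n=2p+1$ with $p\ge1$ an integer and let $1\le k\le p$. If $g$ is a smooth function defined on a neighbourhood of the origin in $\mathbb{R}^n$ which is spherically symmetric (i.e. $g(\vec x)=g(r)$ depends only on $r=|\vec x|$) and satisfies $(I-\Delta)^kg=0$, where $\Delta$ is the Laplacian on $\mathbb{R}^n$, then there are constants $c_{p-k+1},\dots,c_p$ such that \[g(r)=\sum_{i=p-k+1}^pc_i\tau_i(r).\]
   Context: The functions $\tau_i$ are defined by $\tau_0=\cosh$ and $\tau_{i+1}(r)=-\frac1r\tau_i'(r)$ for $r\ne0$, extended to even real-analytic functions on $\mathbb{R}$; $\tau_i(r)$ is regarded as the spherically symmetric function $\vec x\mapsto\tau_i(|\vec x|)$ on $\mathbb{R}^n$. *)

From HB Require Import structures.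
From mathcomp Require Import all_boot all_order all_algebra.
From mathcomp Require Import all_classical all_reals all_analysis.
Set Implicit Arguments. Unset Strict Implicit. Unset Printing Implicit Defensive.
Import Order.TTheory GRing.Theory Num.Theory.
Import numFieldNormedType.Exports.
Local Open Scope ring_scope.
Local Open Scope classical_set_scope.

Definition coshR {R : realType} (x : R) : R := (expR x + expR (- x)) / 2.

Fixpoint tau {R : realType} (i : nat) : R -> R :=
  match i with
  | 0 => coshR
  | i'.+1 => fun r =>
      if r == 0 then lim ((fun s : R => - (derive1 (tau i') s) / s) @ 0^')
      else - (derive1 (tau i') r) / r
  end.

Definition eucl_norm {R : realType} {n : nat} (x : 'rV[R]_n) : R :=
  Num.sqrt (\sum_(i < n) x ord0 i ^+ 2).

Definition ebasis {R : realType} {n : nat} (i : 'I_n) : 'rV[R]_n := delta_mx ord0 i.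

Definition partial {R : realType} {n : nat} (i : 'I_n) (f : 'rV[R]_n -> R)
  : 'rV[R]_n -> R := fun x => derive f x (ebasis i).

Definition partials {R : realType} {n : nat} (s : seq 'I_n) (f : 'rV[R]_n -> R)
  : 'rV[R]_n -> R := foldr partial f s.

Definition smooth_on {R : realType} {n : nat} (U : set 'rV[R]_n)
  (f : 'rV[R]_n -> R) : Prop :=
  forall s : seq 'I_n, forall x, U x ->
    {for x, continuous (partials s f)} /\
    (forall i : 'I_n, derivable (partials s f) x (ebasis i)).

Definition laplacian {R : realType} {n : nat} (f : 'rV[R]_n -> R) : 'rV[R]_n -> R :=
  fun x => \sum_(i < n) partial i (partial i f) x.

Definition helmholtz {R : realType} {n : nat} (f : 'rV[R]_n -> R) : 'rV[R]_n -> R :=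
  fun x => f x - laplacian f x.

From HB Require Import structures.
From mathcomp Require Import all_boot all_order all_algebra.
From mathcomp Require Import all_classical all_reals all_analysis.
From mathcomp Require Import ring lra zify.
Set Implicit Arguments. Unset Strict Implicit. Unset Printing Implicit Defensive.
Import Order.TTheory GRing.Theory Num.Theory.
Import numFieldNormedType.Exports.
Local Open Scope ring_scope.
Local Open Scope classical_set_scope.

(* Write [tau i r = (-1) ^+ i * tser i (r ^+ 2)], where [tser i] is the entire series
   with coefficients [tcoef i j = 2 ^ i (i + j)! / (j! (2 (i + j))!)]; then
   [tser i' = tser i.+1 / 2] and [tser i = (2 i + 1) tser i.+1 + x tser i.+2], so that
   [tau i' = - r tau i.+1] and, the radial Laplacian of R^(2p+1) being [f'' + 2p/r f'],
   [(I - Laplacian) tau i = 2 (p - i) tau i.+1].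
   For smooth radial [g], [(I - Laplacian) g] is again smooth and radial, so by induction
   on [k] it is a combination of [tau (p - k + 2), ..., tau p].  Subtracting from [g]
   the matching combination of [tau (p - k + 1), ..., tau (p - 1)] leaves a solution of
   [f'' + 2p/r f' = f] on [(0, eps)] that is C^1 up to [0]; such a solution is a
   multiple of [tau p], because the Wronskian [r ^+ 2p (u w' - u' w)] is constant and
   vanishes at [0]. *)

Section DeriveValue.
Variable R : realType.
Implicit Types (f g : R -> R) (x a b d : R).

Lemma is_deriveD_eq f g x a b d : is_derive x 1 f a -> is_derive x 1 g b ->
  a + b = d -> is_derive x 1 (fun y => f y + g y) d.
Proof. by move=> ha hb <-; have := is_deriveD ha hb. Qed.

Lemma is_deriveB_eq f g x a b d : is_derive x 1 f a -> is_derive x 1 g b ->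
  a - b = d -> is_derive x 1 (fun y => f y - g y) d.
Proof. by move=> ha hb <-; have := is_deriveB ha hb. Qed.

Lemma is_deriveM_eq f g x a b d : is_derive x 1 f a -> is_derive x 1 g b ->
  f x * b + a * g x = d -> is_derive x 1 (fun y => f y * g y) d.
Proof.
move=> ha hb <-; have := is_deriveM ha hb.
by rewrite /GRing.scale /= [a * _]mulrC.
Qed.

Lemma is_derive_comp_eq f g x a b d : is_derive (g x) 1 f a ->
  is_derive x 1 g b -> a * b = d -> is_derive x 1 (fun y => f (g y)) d.
Proof. by move=> ha hb <-; have := is_derive1_comp ha hb. Qed.

Lemma is_deriveV_eq f x a d : f x != 0 -> is_derive x 1 f a ->
  - (f x) ^- 2 * a = d -> is_derive x 1 (fun y => (f y)^-1) d.
Proof. by move=> h ha <-; have := is_deriveV h ha. Qed.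

Lemma is_deriveZl_eq f x (k a d : R) : is_derive x 1 f a -> k * a = d ->
  is_derive x 1 (fun y => k * f y) d.
Proof. by move=> ha <-; have := is_deriveZ k ha. Qed.

Lemma is_derive_sqr x : is_derive x 1 (fun y : R => y ^+ 2) (2 * x).
Proof.
apply: DeriveDef; first exact: exprn_derivable.
by rewrite exp_derive expr1 [_%:A]mulr1.
Qed.

Lemma is_derive_exprn (m : nat) x :
  is_derive x 1 (fun y : R => y ^+ m) (m%:R * x ^+ m.-1).
Proof.
apply: DeriveDef; first exact: exprn_derivable.
by rewrite exp_derive [_ *: 1]mulr1.
Qed.

Lemma is_derive_expRN x : is_derive x 1 (fun y : R => expR (- y)) (- expR (- x)).
Proof.
have dN : is_derive x 1 (fun y : R => - y) (-1) by exact: is_deriveNid.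
by apply: is_derive_comp_eq (is_derive_expR _) dN _; rewrite mulrN1.
Qed.

Lemma is_derive_continuous f x d : is_derive x 1 f d -> {for x, continuous f}.
Proof. by case=> df _; apply/differentiable_continuous/derivable1_diffP. Qed.

End DeriveValue.

Section DeriveBig.
Variables (R : realType) (V : normedModType R).

Lemma is_derive_big (I : Type) (s : seq I) (F : I -> V -> R) (dF : I -> R) x v :
  (forall i, is_derive x v (F i) (dF i)) ->
  is_derive x v (fun y => \sum_(i <- s) F i y) (\sum_(i <- s) dF i).
Proof.
move=> hF; elim: s => [|a s IH].
  rewrite big_nil; under eq_fun do rewrite big_nil.
  exact: is_derive_cst.
rewrite big_cons; under eq_fun do rewrite big_cons.
by have := is_deriveD (hF a) IH.
Qed.

Lemma is_derive_lineP (f : V -> R) x v d :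
  is_derive x v f d <-> is_derive (0 : R) 1 (fun h : R => f (h *: v + x)) d.
Proof.
have Dline : 'D_v f x = 'D_1 (fun h : R => f (h *: v + x)) 0.
  rewrite /derive [X in _ = lim (X @ _)](_ : _ =
    (fun h : R => h^-1 *: ((f \o shift x) (h *: v) - f x))) //.
  by apply/funext => h /=; rewrite scale0r add0r addr0 [h%:A]mulr1.
split=> -[hd <-]; apply: DeriveDef => //.
- exact: (proj1 (derivable1P f x v) hd).
- exact/derivable1P.
Qed.

End DeriveBig.

Section ContinuousBig.
Variables (R : realType) (T : topologicalType).

Lemma continuous_big (I : Type) (s : seq I) (F : I -> T -> R) x :
  (forall i, {for x, continuous (F i)}) ->
  {for x, continuous (fun y => \sum_(i <- s) F i y)}.
Proof.
move=> hF; elim: s => [|a s IH].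
  have -> : (fun y => \sum_(i <- [::]) F i y) = cst 0.
    by apply/funext => y; rewrite big_nil.
  exact: cvg_cst.
have -> : (fun y => \sum_(i <- a :: s) F i y) = (fun y => F a y + \sum_(i <- s) F i y).
  by apply/funext => y; rewrite big_cons.
exact: cvgD (hF a) IH.
Qed.

Lemma continuous_near_eq (f g : T -> R) x : (\forall y \near x, f y = g y) ->
  {for x, continuous f} -> {for x, continuous g}.
Proof.
move=> fg hf; rewrite /prop_for /continuous_at -(nbhs_singleton fg).
by apply: cvg_trans hf; apply: near_eq_cvg.
Qed.

End ContinuousBig.

Lemma natr_fact_neq0 (R : numDomainType) n : (n`!%:R : R) != 0.
Proof. by rewrite pnatr_eq0 -lt0n fact_gt0. Qed.

Lemma natr_mul2S (R : pzSemiRingType) m : ((2 * m).+1%:R : R) = 2 * m%:R + 1.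
Proof. by rewrite -natr1 natrM. Qed.

Section ExpBoundedSeries.
Variable R : realType.

Lemma is_cvg_pseries_exp_bound (c : nat -> R) C x :
  (forall j, `|c j| <= C / j`!%:R) -> cvgn (pseries c x).
Proof.
move=> hc; apply: normed_cvg.
have C0 : 0 <= C by have := hc 0%N; rewrite fact0 divr1; apply: le_trans.
apply: (@series_le_cvg _ _ (C *: exp_coeff `|x|)).
- by move=> n; rewrite /= normr_ge0.
- by move=> n; rewrite /= mulr_ge0 // exp_coeff_ge0.
- move=> n /=; rewrite normrM normrX /exp_coeff /=.
  rewrite [X in _ <= X](_ : _ = C * (`|x| ^+ n / n`!%:R)) //.
  apply: (le_trans (ler_wpM2r _ (hc n))); first exact: exprn_ge0.
  by rewrite mulrAC mulrA.
- exact/is_cvg_seriesZ/is_cvg_series_exp_coeff.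
Qed.

End ExpBoundedSeries.

Section TSeries.
Variable R : realType.

Definition tcoef (i j : nat) : R :=
  2 ^+ i * (j + i)`!%:R / (j`!%:R * (2 * (j + i))`!%:R).

Lemma tcoef_gt0 i j : 0 < tcoef i j.
Proof. by rewrite /tcoef divr_gt0 // ?mulr_gt0 ?exprn_gt0 // ltr0n fact_gt0. Qed.

Lemma tcoef_le i j : tcoef i j <= 2 ^+ i / j`!%:R.
Proof.
have -> : tcoef i j = 2 ^+ i / j`!%:R * ((j + i)`!%:R / (2 * (j + i))`!%:R).
  by rewrite /tcoef; field; rewrite !natr_fact_neq0.
apply: ler_piMr; first by rewrite divr_ge0 // exprn_ge0.
rewrite ler_pdivrMr ?ltr0n ?fact_gt0 // mul1r ler_nat leq_fact //.
by rewrite mul2n -addnn leq_addr.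
Qed.

Lemma tcoef_shift i j : j.+1%:R * tcoef i j.+1 = tcoef i.+1 j / 2.
Proof.
rewrite /tcoef addSnnS factS natrM exprS.
by field; rewrite !natr_fact_neq0 /= nat1r pnatr_eq0.
Qed.

Lemma pseries_diffs_tcoef i : pseries_diffs (tcoef i) = (fun j => tcoef i.+1 j / 2).
Proof. by apply/funext => j; rewrite /pseries_diffs tcoef_shift. Qed.

Lemma tcoef_rec i j : tcoef i j = (2 * (j + i)).+1%:R * tcoef i.+1 j.
Proof.
rewrite /tcoef addnS; set m := (j + i)%N.
have -> : (2 * m.+1 = (2 * m).+2)%N by rewrite mulnS add2n.
rewrite !factS !natrM exprS -!natr1 !natrM.
field; rewrite !natr_fact_neq0 /=.
by have := ler0n R m => m0; apply/and3P; split => //; apply/eqP; lra.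
Qed.

Definition tser (i : nat) (x : R) : R := limn (pseries (tcoef i) x).

Lemma is_cvg_pseries_tcoef i x : cvgn (pseries (tcoef i) x).
Proof.
apply: (@is_cvg_pseries_exp_bound R _ (2 ^+ i)) => j.
by rewrite ger0_norm ?tcoef_le // ltW // tcoef_gt0.
Qed.

Lemma pseries_half (c : nat -> R) x :
  pseries (fun j => c j / 2) x = 2^-1 *: pseries c x.
Proof.
apply/funext => n; rewrite /pseries /series /=.
rewrite [RHS](_ : _ = 2^-1 * \sum_(0 <= k < n) c k * x ^+ k) // mulr_sumr.
by apply: eq_bigr => j _; rewrite /= mulrAC mulrC.
Qed.

Lemma is_derive_tser i (x : R) : is_derive x (1 : R) (tser i) (tser i.+1 x / 2).
Proof.
have -> : tser i.+1 x / 2 = limn (pseries (pseries_diffs (tcoef i)) x).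
  rewrite pseries_diffs_tcoef pseries_half limZl_tmp; first by rewrite mulrC.
  exact: is_cvg_pseries_tcoef.
have x_lt : `|x| < `| `|x| + 1 |.
  by rewrite [X in _ < X]ger0_norm; [lra|]; have := normr_ge0 x; lra.
have cv1 := @is_cvg_pseries_tcoef i (`|x| + 1).
have cv2 : cvgn (pseries (pseries_diffs (tcoef i)) (`|x| + 1)).
  rewrite pseries_diffs_tcoef pseries_half; apply: is_cvgZl_tmp.
  exact: is_cvg_pseries_tcoef.
have cv3 : cvgn (pseries (pseries_diffs (pseries_diffs (tcoef i))) (`|x| + 1)).
  rewrite pseries_diffs_tcoef.
  apply: (@is_cvg_pseries_exp_bound R _ (2 ^+ i.+2)) => j.
  rewrite /pseries_diffs ger0_norm; last first.
    by rewrite mulr_ge0 // divr_ge0 // ltW // tcoef_gt0.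
  rewrite mulrA tcoef_shift.
  apply: le_trans (tcoef_le i.+2 j).
  rewrite -mulrA ler_piMr ?ltW ?tcoef_gt0 //; lra.
exact: pseries_snd_diffs cv1 cv2 cv3 x_lt.
Qed.

Lemma tser_gt0 i x : 0 <= x -> 0 < tser i x.
Proof.
move=> x0; apply: (lt_le_trans (tcoef_gt0 i 0)).
have nd : nondecreasing_seq (pseries (tcoef i) x).
  apply: nondecreasing_series => n _ _.
  by rewrite mulr_ge0 // ?exprn_ge0 // ltW // tcoef_gt0.
apply: le_trans (nondecreasing_cvgn_le nd (@is_cvg_pseries_tcoef i x) 1).
by rewrite /pseries /series /= big_nat1 expr0 mulr1.
Qed.

Lemma tser0 i : tser i 0 = tcoef i 0.
Proof.
apply: cvg_lim => //; rewrite -cvg_shiftS.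
have -> : (fun n => pseries (tcoef i) 0 n.+1) = cst (tcoef i 0).
  apply/funext => n; rewrite /pseries /series /= big_nat_recl //= expr0 mulr1.
  by rewrite big1 ?addr0 // => k _; rewrite expr0n /= mulr0.
exact: cvg_cst.
Qed.

Lemma tser_rec i x : tser i x = (2 * i).+1%:R * tser i.+1 x + x * tser i.+2 x.
Proof.
pose S k n := pseries (tcoef k) x n.
have SS k n : S k n.+1 = S k n + tcoef k n * x ^+ n.
  by rewrite /S /pseries seriesSr.
have HS n : S i n.+1 = (2 * i).+1%:R * S i.+1 n.+1 + x * S i.+2 n.
  elim: n => [|n IH].
    rewrite /S /pseries /series /= !big_nat1 big_geq // mulr0 addr0 !expr0 !mulr1.
    by rewrite tcoef_rec add0n.
  rewrite (SS i n.+1) (SS i.+1 n.+1) (SS i.+2 n) IH (tcoef_rec i n.+1).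
  have -> : tcoef i.+2 n = 2 * (n.+1%:R * tcoef i.+1 n.+1) by rewrite tcoef_shift; field.
  by rewrite exprS !natr_mul2S natrD -natr1; ring.
have : S i n.+1 @[n --> \oo] --> (2 * i).+1%:R * tser i.+1 x + x * tser i.+2 x.
  under eq_fun do rewrite HS.
  apply: cvgD; apply: cvgMl_tmp; last exact: is_cvg_pseries_tcoef.
  by rewrite (cvg_shiftS (S i.+1)); exact: is_cvg_pseries_tcoef.
by rewrite (cvg_shiftS (S i)) => /cvg_lim <-.
Qed.

End TSeries.

Section Tau.
Variable R : realType.

Definition sinhR (x : R) : R := (expR x - expR (- x)) / 2.

Lemma is_derive_coshR (x : R) : is_derive x 1 coshR (sinhR x).
Proof.
apply: is_deriveM_eq (is_deriveD_eq (is_derive_expR x) (is_derive_expRN x) erefl)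
  (is_derive_cst _ _ _) _.
by rewrite mulr0 add0r.
Qed.

Lemma is_derive_sinhR (x : R) : is_derive x 1 sinhR (coshR x).
Proof.
apply: is_deriveM_eq (is_deriveB_eq (is_derive_expR x) (is_derive_expRN x) erefl)
  (is_derive_cst _ _ _) _.
by rewrite mulr0 add0r opprK.
Qed.

Lemma is_derive_tser_sqr i (r : R) :
  is_derive r 1 (fun s => tser i (s ^+ 2)) (r * tser i.+1 (r ^+ 2)).
Proof. by apply: is_derive_comp_eq (is_derive_tser i _) (is_derive_sqr r) _; field. Qed.

Lemma coshR_tser (r : R) : coshR r = tser 0 (r ^+ 2).
Proof.
pose h (y : R) := coshR y - tser 0 (y ^+ 2).
pose h1 (y : R) := sinhR y - y * tser 1 (y ^+ 2).
(* [h 0 = h1 0 = 0], [h' = h1] and [h1' = h]: first [(h + h1) * expR (- y)], then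
   [h * expR y] has zero derivative. *)
have dh (y : R) : is_derive y 1 h (h1 y).
  exact: is_deriveB_eq (is_derive_coshR y) (is_derive_tser_sqr 0 y) erefl.
have dh1 (y : R) : is_derive y 1 h1 (h y).
  apply: is_deriveB_eq (is_derive_sinhR y)
    (is_deriveM_eq (is_derive_id y 1) (is_derive_tser_sqr 1 y) erefl) _.
  by rewrite /h (tser_rec 0 (y ^+ 2)) muln0 mul1r expr2; ring.
have h0 : h 0 = 0.
  rewrite /h expr0n /= tser0 /tcoef /coshR oppr0 expR0 /=.
  by rewrite expr0 fact0 !mul1r; field.
have h10 : h1 0 = 0 by rewrite /h1 /sinhR oppr0 expR0 subrr !mul0r subr0.
have hh1 (y : R) : h y + h1 y = 0.
  have dE (z : R) : is_derive z 1 (fun z => (h z + h1 z) * expR (- z)) 0.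
    apply: is_deriveM_eq (is_deriveD_eq (dh z) (dh1 z) erefl) (is_derive_expRN z) _.
    by ring.
  have /eqP := is_derive_0_is_cst y 0 dE.
  by rewrite h0 h10 addr0 mul0r mulf_eq0 expR_eq0 orbF => /eqP.
have dD (z : R) : is_derive z 1 (fun z => h z * expR z) 0.
  apply: is_deriveM_eq (dh z) (is_derive_expR z) _.
  by rewrite -mulrDl hh1 mul0r.
have /eqP := is_derive_0_is_cst r 0 dD.
by rewrite h0 mul0r mulf_eq0 expR_eq0 orbF subr_eq0 => /eqP.
Qed.

Lemma tau_tser i : @tau R i = fun r => (-1) ^+ i * tser i (r ^+ 2).
Proof.
elim: i => [|i IH]; apply/funext => r; first by rewrite /= coshR_tser expr0 mul1r.
have tau'E : derive1 (@tau R i) = fun s => (-1) ^+ i * (s * tser i.+1 (s ^+ 2)).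
  apply/funext => s; rewrite IH derive1E; apply: derive_val.
  exact: is_deriveZl_eq (is_derive_tser_sqr i s) erefl.
rewrite /= tau'E; case: eqP => [->|/eqP r0]; last by rewrite [(-1) ^+ i.+1]exprS; field.
pose phi (s : R) := (-1) ^+ i.+1 * tser i.+1 (s ^+ 2).
have phi_cont : phi s @[s --> (0:R)^'] --> phi 0.
  apply/continuous_withinNx/is_derive_continuous.
  exact: is_deriveZl_eq (is_derive_tser_sqr i.+1 0) erefl.
apply: cvg_lim => //; apply: cvg_trans phi_cont; apply: near_eq_cvg.
near=> s; have s0 : s != 0 by near: s; exact: nbhs_dnbhs_neq.
by rewrite /phi [(-1) ^+ i.+1]exprS; field.
Unshelve. all: by end_near.
Qed.

Lemma is_derive_tau i (r : R) : is_derive r 1 (@tau R i) (- r * tau i.+1 r).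
Proof.
rewrite !tau_tser; apply: is_deriveZl_eq (is_derive_tser_sqr i r) _.
by rewrite [(-1) ^+ i.+1]exprS; ring.
Qed.

Lemma is_derive_tau_derive i (r : R) :
  is_derive r 1 (fun s => - s * tau i.+1 s) (r ^+ 2 * tau i.+2 r - tau i.+1 r).
Proof.
have dN : is_derive r 1 (fun s : R => - s) (-1) by exact: is_deriveNid.
by apply: is_deriveM_eq dN (is_derive_tau i.+1 r) _; ring.
Qed.

Lemma continuous_tau i : continuous (@tau R i).
Proof. by move=> x; apply: is_derive_continuous (is_derive_tau i x). Qed.

Lemma tau_neq0 i (r : R) : tau i r != 0.
Proof.
rewrite tau_tser mulf_neq0 ?expf_neq0 ?oppr_eq0 ?oner_eq0 //.
by rewrite gt_eqF // tser_gt0 // sqr_ge0.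
Qed.

(* [(I - Laplacian) tau i = 2 (p - i) tau i.+1] in dimension [2 p + 1], written with
   [tau i' = - r * tau i.+1] and [tau i'' = r ^+ 2 * tau i.+2 - tau i.+1]. *)
Lemma tau_ode (p i : nat) (r : R) : r != 0 ->
  r ^+ 2 * tau i.+2 r - tau i.+1 r =
  tau i r - p.*2%:R / r * (- r * tau i.+1 r) - 2 * (p%:R - i%:R) * tau i.+1 r.
Proof.
move=> r0; rewrite !tau_tser (tser_rec i (r ^+ 2)) natr_mul2S -mul2n natrM !exprS.
by field.
Qed.

Lemma tau_sum_ode (p a b : nat) (d e : nat -> R) (r : R) : r != 0 ->
  (forall j, (a <= j < b)%N -> 2 * (p%:R - j%:R) * d j = e j) ->
  \sum_(a <= j < b) d j * (r ^+ 2 * tau j.+2 r - tau j.+1 r) =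
  \sum_(a <= j < b) d j * tau j r
  - p.*2%:R / r * \sum_(a <= j < b) d j * (- r * tau j.+1 r)
  - \sum_(a <= j < b) e j * tau j.+1 r.
Proof.
move=> r0 de; rewrite mulr_sumr -!sumrB; apply: eq_big_nat => j aj; rewrite -(de j aj).
by rewrite (tau_ode p j r0); ring.
Qed.

End Tau.

Section ConstantOnInterval.
Variable R : realType.

Lemma is_derive0_cst_oo (f : R -> R) (a b : R) :
  (forall x, a < x < b -> is_derive x 1 f 0) ->
  forall x y, a < x < b -> a < y < b -> f x = f y.
Proof.
move=> hd x y; wlog xy : x y / x <= y.
  move=> H hx hy; have [/H|/ltW /H] := leP x y; first exact.
  by move=> h; apply/esym/h.
move=> /andP[ax xb] /andP[ay yb].
case: (@MVT_segment R f (fun _ => 0) x y xy).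
- move=> z; rewrite in_itv /= => /andP[xz zy]; apply: hd.
  by rewrite (lt_trans ax xz) (lt_trans zy yb).
- apply: derivable_within_continuous => z; rewrite in_itv /= => /andP[xz zy].
  by have [] : is_derive z 1 f 0 by apply: hd; rewrite (lt_le_trans ax xz) (le_lt_trans zy yb).
- by move=> c _ /eqP; rewrite mul0r subr_eq0 => /eqP ->.
Qed.

Lemma continuous_cst_oo_at (f : R -> R) (a b C : R) : a < b ->
  {for a, continuous f} -> (forall x, a < x < b -> f x = C) -> f a = C.
Proof.
move=> ab fa fC.
have f_right : f x @[x --> a^'+] --> f a by apply: cvg_at_right_filter.
have f_rightC : f x @[x --> a^'+] --> C.
  have cstC : (fun _ : R => C) @ a^'+ --> C by exact: cvg_cst.
  apply: cvg_trans cstC; apply: near_eq_cvg.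
  near=> x; apply/esym/fC; apply/andP; split.
    by near: x; exact: nbhs_right_gt.
  by near: x; apply: nbhs_right_lt.
by rewrite -(cvg_lim (@Rhausdorff R) f_right) // (cvg_lim (@Rhausdorff R) f_rightC).
Unshelve. all: by end_near.
Qed.

End ConstantOnInterval.

Section RadialODE.
Variables (R : realType) (m : nat) (eps : R).
Hypotheses (eps_gt0 : 0 < eps) (m_gt0 : (0 < m)%N).
Variables (u u1 w w1 : R -> R).
Hypothesis du : forall r, 0 < r < eps -> is_derive r 1 u (u1 r).
Hypothesis du1 : forall r, 0 < r < eps -> is_derive r 1 u1 (u r - m%:R / r * u1 r).
Hypothesis dw : forall r, 0 < r < eps -> is_derive r 1 w (w1 r).
Hypothesis dw1 : forall r, 0 < r < eps -> is_derive r 1 w1 (w r - m%:R / r * w1 r).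
Hypotheses (u_cont : {for 0, continuous u}) (u1_cont : {for 0, continuous u1}).
Hypotheses (w_cont : {for 0, continuous w}) (w1_cont : {for 0, continuous w1}).

Let half_eps : 0 < eps / 2 < eps.
Proof. by have := eps_gt0 => e0; apply/andP; split; lra. Qed.

(* Abel's identity: [r ^+ m] is an integrating factor of the Wronskian; since it
   vanishes at [0], so does the Wronskian on [(0, eps)]. *)
Lemma wronskian_eq0 r : 0 < r < eps -> u r * w1 r - u1 r * w r = 0.
Proof.
pose W r := r ^+ m * (u r * w1 r - u1 r * w r).
have dW r' : 0 < r' < eps -> is_derive r' 1 W 0.
  move=> hr'; have r'0 : r' != 0 by case/andP: hr' => /gt_eqF ->.
  apply: is_deriveM_eq (is_derive_exprn m r')
    (is_deriveB_eq (is_deriveM_eq (du hr') (dw1 hr') erefl)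
                   (is_deriveM_eq (du1 hr') (dw hr') erefl) erefl) _.
  by rewrite -(prednK m_gt0) exprS /=; field.
have Wcst r' : 0 < r' < eps -> W r' = W (eps / 2).
  by move=> hr'; apply: (is_derive0_cst_oo dW hr' half_eps).
have W0 : W 0 = W (eps / 2).
  apply: (continuous_cst_oo_at eps_gt0 _ Wcst).
  apply: cvgM; first exact: is_derive_continuous (is_derive_exprn m 0).
  by apply: cvgB; apply: cvgM.
move=> hr; have /eqP := Wcst r hr.
rewrite -W0 /W expr0n (gtn_eqF m_gt0) mul0r mulf_eq0 expf_eq0 m_gt0 /=.
by case/andP: hr => /gt_eqF -> _ /eqP.
Qed.

Hypothesis u_neq0 : forall r, 0 < r < eps -> u r != 0.

Lemma ode_sol_proportional : exists c, forall r, 0 < r < eps -> w r = c * u r.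
Proof.
pose q r := w r * (u r)^-1.
have dq r : 0 < r < eps -> is_derive r 1 q 0.
  move=> hr; apply: is_deriveM_eq (dw hr) (is_deriveV_eq (u_neq0 hr) (du hr) erefl) _.
  rewrite (_ : _ + _ = (u r * w1 r - u1 r * w r) / (u r) ^+ 2).
    by rewrite wronskian_eq0 // mul0r.
  by field; rewrite u_neq0.
exists (q (eps / 2)) => r hr.
by rewrite -(is_derive0_cst_oo dq hr half_eps) /q mulrVK // unitfE u_neq0.
Qed.

End RadialODE.

Section EuclNorm.
Variables (R : realType) (n : nat).
Implicit Types (x z : 'rV[R]_n).
Local Notation N := (@eucl_norm R n).

Lemma eucl_norm_sqr x : N x ^+ 2 = \sum_(j < n) x ord0 j ^+ 2.
Proof. by rewrite sqr_sqrtr // sumr_ge0 // => j _; rewrite sqr_ge0. Qed.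

Lemma eucl_norm_ge0 x : 0 <= N x.
Proof. exact: sqrtr_ge0. Qed.

Lemma eucl_norm_eq0 x : (N x == 0) = (x == 0).
Proof.
apply/idP/eqP => [|->]; last first.
  by rewrite /eucl_norm big1 ?sqrtr0 // => j _; rewrite mxE expr0n.
rewrite -sqrf_eq0 eucl_norm_sqr psumr_eq0 => [/allP x0|j _]; last exact: sqr_ge0.
apply/matrixP => a j; rewrite ord1 mxE.
by apply/eqP; rewrite -sqrf_eq0; apply: x0; exact: mem_index_enum.
Qed.

Lemma eucl_norm0 : N 0 = 0.
Proof. by apply/eqP; rewrite eucl_norm_eq0. Qed.

Lemma eucl_norm_gt0 x : (0 < N x) = (x != 0).
Proof. by rewrite lt_def eucl_norm_ge0 eucl_norm_eq0 andbT. Qed.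

Lemma eucl_norm_line_sqr (h : R) (i : 'I_n) z :
  N (h *: ebasis i + z) ^+ 2 = h ^+ 2 + 2 * h * z ord0 i + N z ^+ 2.
Proof.
have sum_delta (a : 'I_n -> R) : \sum_(j < n) (i == j)%:R * a j = a i.
  rewrite (bigD1 i) //= eqxx mul1r big1 ?addr0 // => j /negPf.
  by rewrite eq_sym => ->; rewrite mul0r.
rewrite !eucl_norm_sqr -(sum_delta (fun _ => h ^+ 2)) -(sum_delta (fun j => 2 * h * z ord0 j)).
rewrite -!big_split; apply: eq_bigr => j _ /=.
rewrite !mxE eqxx [j == i]eq_sym /=.
by case: (i == j); rewrite ?mul1r ?mul0r ?mulr1 ?mulr0 ?add0r //; ring.
Qed.

Lemma eucl_norm_ebasis (r : R) (i : 'I_n) : N (r *: ebasis i) = `|r|.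
Proof.
rewrite -[LHS]ger0_norm ?eucl_norm_ge0 // -sqrtr_sqr -[r *: _]addr0.
by rewrite eucl_norm_line_sqr eucl_norm0 mxE mulr0 expr0n /= !addr0 sqrtr_sqr.
Qed.

Lemma continuous_eucl_norm : continuous N.
Proof.
move=> x; apply: (@continuous_comp _ _ _
  (fun y : 'rV[R]_n => \sum_(j < n) y ord0 j ^+ 2) Num.sqrt).
  apply: continuous_big => j.
  have -> : (fun y : 'rV[R]_n => y ord0 j ^+ 2) = (fun y => y ord0 j * y ord0 j).
    by apply/funext => y; rewrite expr2.
  have cj : continuous (fun y : 'rV[R]_n => y ord0 j) := @coord_continuous R 1 n ord0 j.
  exact: cvgM (cj x) (cj x).
exact: sqrt_continuous.
Qed.

Lemma is_derive_eucl_norm_line (i : 'I_n) z : z != 0 ->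
  is_derive (0 : R) 1 (fun h : R => N (h *: ebasis i + z)) (z ord0 i / N z).
Proof.
move=> z0; have Nz : 0 < N z by rewrite eucl_norm_gt0.
have -> : (fun h : R => N (h *: ebasis i + z)) =
          (fun h => Num.sqrt (h ^+ 2 + 2 * z ord0 i * h + N z ^+ 2)).
  apply/funext => h; rewrite [2 * z ord0 i * h]mulrAC -eucl_norm_line_sqr.
  by rewrite sqrtr_sqr ger0_norm ?eucl_norm_ge0.
apply: (is_derive_comp_eq (f := Num.sqrt)
  (g := fun h => h ^+ 2 + 2 * z ord0 i * h + N z ^+ 2)).
  by rewrite expr0n /= mulr0 !add0r; apply: is_derive1_sqrt; rewrite exprn_gt0.
rewrite sqrtr_sqr ger0_norm ?eucl_norm_ge0 // ![_%:A]mulr1.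
by rewrite !add0r addr0; field; rewrite gt_eqF.
Qed.

End EuclNorm.

Section RadialFunction.
Variables (R : realType) (m : nat) (eps : R) (g : 'rV[R]_m.+1 -> R).
Local Notation N := (@eucl_norm R m.+1).
Local Notation e0 := (@ebasis R m.+1 ord0).
Local Notation ball := [set x : 'rV[R]_m.+1 | N x < eps].
Hypothesis g_smooth : smooth_on ball g.
Hypothesis g_radial : forall x y, N x < eps -> N y < eps -> N x = N y -> g x = g y.

Definition profile (r : R) := g (r *: e0).
Definition profile1 (r : R) := partial ord0 g (r *: e0).
Definition profile2 (r : R) := partial ord0 (partial ord0 g) (r *: e0).

Lemma radial_profileE x : N x < eps -> g x = profile (N x).
Proof.
by move=> hx; apply: g_radial; rewrite // eucl_norm_ebasis ger0_norm ?eucl_norm_ge0.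
Qed.

Lemma is_derive_partials (s : seq 'I_m.+1) y (i : 'I_m.+1) : N y < eps ->
  is_derive y (ebasis i) (partials s g) (partials (i :: s) g y).
Proof. by move=> hy; have [_ /(_ i) /derivableP] := g_smooth s hy. Qed.

Lemma continuous_partials (s : seq 'I_m.+1) y : N y < eps ->
  {for y, continuous (partials s g)}.
Proof. by move=> hy; have [] := g_smooth s hy. Qed.

Lemma is_derive_e0_line (G : 'rV[R]_m.+1 -> R) (s d : R) :
  is_derive (s *: e0) e0 G d -> is_derive s 1 (fun t => G (t *: e0)) d.
Proof.
move=> /is_derive_lineP hG; apply/is_derive_lineP.
by under eq_fun do rewrite [_%:A]mulr1 scalerDl.
Qed.

Lemma is_derive_profile (s : R) : `|s| < eps -> is_derive s 1 profile (profile1 s).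
Proof.
move=> hs; apply: is_derive_e0_line.
by apply: (is_derive_partials [::]); rewrite eucl_norm_ebasis.
Qed.

Lemma is_derive_profile1 (s : R) : `|s| < eps -> is_derive s 1 profile1 (profile2 s).
Proof.
move=> hs; apply: is_derive_e0_line.
by apply: (is_derive_partials [:: ord0]); rewrite eucl_norm_ebasis.
Qed.

Hypothesis eps_gt0 : 0 < eps.

Lemma continuous_partials_e0_line0 (s : seq 'I_m.+1) :
  {for 0, continuous (fun r : R => partials s g (r *: e0))}.
Proof.
apply: (@continuous_comp _ _ _ (fun r : R => r *: e0) (partials s g)).
  exact: scalel_continuous.
by rewrite /= scale0r; apply: continuous_partials; rewrite eucl_norm0.
Qed.

Lemma near_ball x : N x < eps -> \forall y \near x, N y < eps.
Proof.
move=> hx; have c : N y @[y --> x] --> N x by apply: continuous_eucl_norm.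
exact: (cvgr_lt _ c).
Qed.

Lemma near_punctured_ball_line (i : 'I_m.+1) z : z != 0 -> N z < eps ->
  \forall h \near (0 : R), 0 < N (h *: ebasis i + z) < eps.
Proof.
move=> z0 hz.
have c : (fun h : R => N (h *: ebasis i + z)) @ (0 : R) --> N z.
  have := is_derive_continuous (is_derive_eucl_norm_line i z0).
  by rewrite /prop_for /continuous_at scale0r add0r.
near=> h; apply/andP; split.
  by near: h; apply: (cvgr_gt _ c); rewrite eucl_norm_gt0.
by near: h; apply: (cvgr_lt _ c).
Unshelve. all: by end_near.
Qed.

Lemma is_derive_radial (i : 'I_m.+1) z : z != 0 -> N z < eps ->
  is_derive z (ebasis i) g (profile1 (N z) * (z ord0 i / N z)).
Proof.
move=> z0 hz; apply/is_derive_lineP.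
apply: (@near_eq_is_derive _ _ _ (fun h : R => profile (N (h *: ebasis i + z)))).
  apply: filterS (near_punctured_ball_line i z0 hz) => h /andP[_ hh].
  by rewrite -radial_profileE.
apply: is_derive_comp_eq (is_derive_eucl_norm_line i z0) erefl.
by rewrite scale0r add0r; apply: is_derive_profile; rewrite ger0_norm ?eucl_norm_ge0.
Qed.

Lemma partial_radial (i : 'I_m.+1) z : z != 0 -> N z < eps ->
  partial i g z = profile1 (N z) * (z ord0 i / N z).
Proof. by move=> z0 hz; have [_ <-] := is_derive_radial i z0 hz. Qed.

Lemma is_derive_partial_radial (i : 'I_m.+1) x : x != 0 -> N x < eps ->
  is_derive x (ebasis i) (partial i g)
    ((profile2 (N x) / N x ^+ 2 - profile1 (N x) / N x ^+ 3) * x ord0 i ^+ 2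
     + profile1 (N x) / N x).
Proof.
move=> x0 hx; apply/is_derive_lineP.
pose psi (h : R) := N (h *: ebasis i + x).
apply: (@near_eq_is_derive _ _ _ (fun h => profile1 (psi h) * (h + x ord0 i) * (psi h)^-1)).
  apply: filterS (near_punctured_ball_line i x0 hx) => h /andP[h0 hh].
  by rewrite partial_radial -?eucl_norm_gt0 // /psi !mxE /= eqxx mulr1 mulrA.
have Nx : 0 < N x by rewrite eucl_norm_gt0.
have psi0 : psi 0 = N x by rewrite /psi scale0r add0r.
have dpsi := is_derive_eucl_norm_line i x0.
have dprofile1 : is_derive (psi 0) 1 profile1 (profile2 (N x)).
  by rewrite psi0; apply: is_derive_profile1; rewrite ger0_norm ?eucl_norm_ge0.
have dlin : is_derive (0 : R) 1 (fun h : R => h + x ord0 i) 1.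
  by apply: is_deriveD_eq (is_derive_id _ _) (is_derive_cst _ _ _) _; rewrite addr0.
apply: is_deriveM_eq (is_deriveM_eq (is_derive_comp_eq dprofile1 dpsi erefl) dlin erefl)
  (is_deriveV_eq _ dpsi erefl) _; rewrite -/(psi 0) psi0 ?gt_eqF //.
by rewrite add0r; field; rewrite gt_eqF.
Qed.

Lemma laplacian_radial x : x != 0 -> N x < eps ->
  laplacian g x = profile2 (N x) + m%:R / N x * profile1 (N x).
Proof.
move=> x0 hx; have Nx : 0 < N x by rewrite eucl_norm_gt0.
rewrite /laplacian (eq_bigr (fun i => (profile2 (N x) / N x ^+ 2 - profile1 (N x) / N x ^+ 3)
    * x ord0 i ^+ 2 + profile1 (N x) / N x)); last first.
  by move=> i _; have [_ <-] := is_derive_partial_radial i x0 hx.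
rewrite big_split /= -mulr_sumr -eucl_norm_sqr sumr_const card_ord mulrS -mulr_natr.
by field; rewrite gt_eqF.
Qed.

Lemma is_derive_partials_helmholtz s x (j : 'I_m.+1) : N x < eps ->
  is_derive x (ebasis j)
    (fun y => partials s g y - \sum_(i < m.+1) partials (s ++ [:: i; i]) g y)
    (partials (j :: s) g x - \sum_(i < m.+1) partials ((j :: s) ++ [:: i; i]) g x).
Proof.
move=> hx; apply: is_deriveB (is_derive_partials s j hx) _.
by apply: is_derive_big => i; apply: is_derive_partials.
Qed.

Lemma partials_helmholtz s x : N x < eps ->
  partials s (helmholtz g) x =
  partials s g x - \sum_(i < m.+1) partials (s ++ [:: i; i]) g x.
Proof.
elim: s x => [//|j s IH] x hx.
have [_ <-] := near_eq_is_derive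
  (filterS (fun y hy => esym (IH y hy)) (near_ball hx))
  (is_derive_partials_helmholtz s j hx).
done.
Qed.

Lemma smooth_helmholtz : smooth_on ball (helmholtz g).
Proof.
move=> s x /= hx.
have eq_near : \forall y \near x,
    partials s g y - \sum_(i < m.+1) partials (s ++ [:: i; i]) g y =
    partials s (helmholtz g) y.
  by apply: filterS (near_ball hx) => y hy; rewrite partials_helmholtz.
split=> [|i].
  apply: continuous_near_eq eq_near _.
  have hsum : {for x, continuous (fun y => \sum_(i < m.+1) partials (s ++ [:: i; i]) g y)}.
    by apply: continuous_big => i; apply: continuous_partials.
  exact: (continuousB (continuous_partials (s := s) hx) hsum).
have [D _] := is_derive_partials_helmholtz s i hx.
exact: near_eq_derivable eq_near D.
Qed.

Lemma helmholtz_radialE x : x != 0 -> N x < eps ->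
  helmholtz g x = profile (N x) - (profile2 (N x) + m%:R / N x * profile1 (N x)).
Proof. by move=> x0 hx; rewrite /helmholtz laplacian_radial // radial_profileE. Qed.

Lemma radial_helmholtz x y : N x < eps -> N y < eps -> N x = N y ->
  helmholtz g x = helmholtz g y.
Proof.
move=> hx hy Nxy; have [x0|x0] := eqVneq x 0.
  suff y0 : y = 0 by rewrite x0 y0.
  by apply/eqP; rewrite -eucl_norm_eq0 -Nxy x0 eucl_norm0.
have y0 : y != 0 by rewrite -eucl_norm_gt0 -Nxy eucl_norm_gt0.
by rewrite !helmholtz_radialE // Nxy.
Qed.

Lemma profile_ode (H : R -> R) :
  (forall x, N x < eps -> helmholtz g x = H (N x)) ->
  forall r, 0 < r < eps -> profile2 r = profile r - m%:R / r * profile1 r - H r.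
Proof.
move=> hH r /andP[r0 re]; have Nr : N (r *: e0) = r by rewrite eucl_norm_ebasis gtr0_norm.
have x0 : r *: e0 != 0 by rewrite -eucl_norm_gt0 Nr.
have := hH (r *: e0); rewrite helmholtz_radialE ?Nr // => /(_ re) <-.
by ring.
Qed.

Lemma radial_eq_on_ball (F : R -> R) : {for 0, continuous F} ->
  (forall r, 0 < r < eps -> profile r = F r) -> forall x, N x < eps -> g x = F (N x).
Proof.
move=> F0 gF x hx; have [->|x0] := eqVneq x 0; last first.
  by rewrite radial_profileE // gF // eucl_norm_gt0 x0 hx.
rewrite eucl_norm0 -[0 in LHS](scale0r e0); apply/eqP; rewrite -subr_eq0; apply/eqP.
apply: (@continuous_cst_oo_at _ (fun r => profile r - F r) 0 eps) => // [|r hr].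
  exact: (continuousB (continuous_partials_e0_line0 (s := [::])) F0).
by rewrite gF ?subrr.
Qed.

End RadialFunction.

Section HelmholtzKernel.
Variables (R : realType) (p : nat) (eps : R).
Hypotheses (p_gt0 : (0 < p)%N) (eps_gt0 : 0 < eps).
Local Notation N := (@eucl_norm R p.*2.+1).
Local Notation ball := [set x : 'rV[R]_p.*2.+1 | N x < eps].

Section RadialPreimage.
Variable g : 'rV[R]_p.*2.+1 -> R.
Hypothesis g_smooth : smooth_on ball g.
Hypothesis g_radial : forall x y, N x < eps -> N y < eps -> N x = N y -> g x = g y.

Lemma profile_sub_particular_tau (H f f1 f2 : R -> R) :
  (forall x, N x < eps -> helmholtz g x = H (N x)) ->
  (forall r : R, is_derive r 1 f (f1 r)) -> (forall r : R, is_derive r 1 f1 (f2 r)) ->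
  (forall r, 0 < r < eps -> f2 r = f r - p.*2%:R / r * f1 r - H r) ->
  exists c, forall r, 0 < r < eps -> profile g r - f r = c * tau p r.
Proof.
move=> hH df df1 f_ode.
apply: (@ode_sol_proportional R p.*2 eps eps_gt0 _ (tau p) (fun r => - r * tau p.+1 r)
  (fun r => profile g r - f r) (fun r => profile1 g r - f1 r)).
- by rewrite double_gt0.
- by move=> r _; exact: is_derive_tau.
- move=> r /andP[/lt0r_neq0 r0 _]; apply: is_derive_eq (is_derive_tau_derive p r) _.
  by rewrite (tau_ode p) // subrr mulr0 mul0r subr0.
- move=> r /andP[r0 re]; apply: is_deriveB_eq (is_derive_profile g_smooth _) (df r) erefl.
  by rewrite gtr0_norm.
- move=> r hr; have /andP[r0 re] := hr.
  apply: is_deriveB_eq (is_derive_profile1 g_smooth _) (df1 r) _; first by rewrite gtr0_norm.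
  by rewrite (profile_ode g_smooth g_radial hH hr) f_ode //; ring.
- exact: continuous_tau.
- exact: is_derive_continuous (is_derive_tau_derive p 0).
- exact: continuousB (continuous_partials_e0_line0 g_smooth eps_gt0 (s := [::]))
                     (is_derive_continuous (df 0)).
- exact: continuousB (continuous_partials_e0_line0 g_smooth eps_gt0 (s := [:: ord0]))
                     (is_derive_continuous (df1 0)).
- by move=> r _; exact: tau_neq0.
Qed.

Lemma helmholtz_preimage_tau_span k (c : nat -> R) : (k < p)%N ->
  (forall x, N x < eps -> helmholtz g x = \sum_(p - k + 1 <= i < p.+1) c i * tau i (N x)) ->
  exists c' : nat -> R, forall x, N x < eps ->
    g x = \sum_(p - k.+1 + 1 <= i < p.+1) c' i * tau i (N x).
Proof.
move=> kp hc.
pose d j := c j.+1 / (2 * (p%:R - j%:R)).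
pose f r := \sum_(p - k <= j < p) d j * tau j r.
pose f1 r := \sum_(p - k <= j < p) d j * (- r * tau j.+1 r).
pose f2 r := \sum_(p - k <= j < p) d j * (r ^+ 2 * tau j.+2 r - tau j.+1 r).
have df (r : R) : is_derive r 1 f (f1 r).
  by apply: is_derive_big => j; apply: is_deriveZl_eq (is_derive_tau j r) erefl.
have df1 (r : R) : is_derive r 1 f1 (f2 r).
  by apply: is_derive_big => j; apply: is_deriveZl_eq (is_derive_tau_derive j r) erefl.
pose H r := \sum_(p - k <= j < p) c j.+1 * tau j.+1 r.
have hH x : N x < eps -> helmholtz g x = H (N x).
  by move=> hx; rewrite hc // addn1 big_add1.
have f_ode r : 0 < r < eps -> f2 r = f r - p.*2%:R / r * f1 r - H r.
  move=> /andP[/lt0r_neq0 r0 _]; apply: tau_sum_ode => // j /andP[_ jp].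
  by rewrite /d mulrC divfK // mulf_neq0 // subr_eq0 eqr_nat gtn_eqF.
have [c0 hc0] := profile_sub_particular_tau hH df df1 f_ode.
pose c' i := if i == p then c0 else d i.
have c'E r : \sum_(p - k.+1 + 1 <= i < p.+1) c' i * tau i r = f r + c0 * tau p r.
  rewrite (_ : p - k.+1 + 1 = p - k)%N; last by lia.
  rewrite big_nat_recr /=; last by lia.
  rewrite /c' eqxx; congr (_ + _).
  by apply: eq_big_nat => i /andP[_ ip]; rewrite (ltn_eqF ip).
exists c' => x hx; rewrite c'E; move: x hx.
apply: (radial_eq_on_ball g_smooth g_radial eps_gt0 (F := fun r => f r + c0 * tau p r)).
  apply: cvgD; first exact: is_derive_continuous (df 0).
  by apply: cvgM; [exact: cvg_cst | exact: continuous_tau].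
by move=> r hr; rewrite -hc0 //; ring.
Qed.

End RadialPreimage.

Lemma iter_helmholtz_kernel k (g : 'rV[R]_p.*2.+1 -> R) : (k <= p)%N ->
  smooth_on ball g ->
  (forall x y, N x < eps -> N y < eps -> N x = N y -> g x = g y) ->
  (forall x, N x < eps -> iter k helmholtz g x = 0) ->
  exists c : nat -> R, forall x, N x < eps ->
    g x = \sum_(p - k + 1 <= i < p.+1) c i * tau i (N x).
Proof.
elim: k g => [|k IH] g kp hs hr hk.
  by exists (fun=> 0) => x hx; rewrite big_geq ?subn0 ?addn1 //; apply: hk.
have hk' x : N x < eps -> iter k helmholtz (helmholtz g) x = 0.
  by rewrite -iterSr; exact: hk.
have [c hc] := IH _ (ltnW kp) (smooth_helmholtz hs) (radial_helmholtz hs hr) hk'.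
exact: (helmholtz_preimage_tau_span hs hr kp hc).
Qed.

End HelmholtzKernel.

Theorem theorem3p8 (R : realType) (p k : nat) (hp : (1 <= p)%N)
  (hk1 : (1 <= k)%N) (hkp : (k <= p)%N)
  (g : 'rV[R]_(p.*2.+1) -> R) (eps : R) (heps : 0 < eps) :
  let U := [set x : 'rV[R]_(p.*2.+1) | eucl_norm x < eps] in
  smooth_on U g ->
  (forall x y, U x -> U y -> eucl_norm x = eucl_norm y -> g x = g y) ->
  (forall x, U x -> iter k helmholtz g x = 0) ->
  exists c : nat -> R, forall x, U x ->
    g x = \sum_(p - k + 1 <= i < p.+1) c i * tau i (eucl_norm x).
Proof. exact: iter_helmholtz_kernel. Qed.
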